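(* Let $G$ be a finite metacyclic group of even order. Then $G$ has a cyclic normal subgroup $N$ such that $G/N$ is cyclic of even order. If moreover $G$ is split metacyclic, then $G\cong C_m\rtimes C_n$ for some $m,n$ with $n$ even.
   Context: A finite group $G$ is metacyclic if it has a cyclic normal subgroup $N$ with $G/N$ cyclic. $G$ is split metacyclic if $G\cong C_m\rtimes C_n$ for some $m,n$, where $C_k$ is the cyclic group of order $k$. *)

From mathcomp Require Import all_boot all_fingroup all_solvable.
Set Implicit Arguments. Unset Strict Implicit. Unset Printing Implicit Defensive.
Local Open Scope group_scope.

Definition split_metacyclic (gT : finGroupType) (G : {set gT}) : Prop :=
  exists K H : {group gT}, [/\ K ><| H = G, cyclic K & cyclic H].

From mathcomp Require Import all_boot all_fingroup all_solvable.
Set Implicit Arguments. Unset Strict Implicit. Unset Printing Implicit Defensive.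
Local Open Scope group_scope.

(* Everything rests on one fact: a group acting on a cyclic group K of order
   coprime to totient #|K| = #|Aut K| acts trivially.
   If G / N has odd order then #|N| is even, and the index-2 subgroup M of N is
   characteristic in N, hence normal in G. Then N / M, of order 2, is central
   in G / M and, as a normal Hall subgroup, splits off as a direct factor:
   G / M = N / M x C with C ~ G / N, so G / M is cyclic of even order.
   If G = K ><| H with #|H| odd, the Sylow 2-subgroup K2 of K has a 2-group of
   automorphisms, so H centralizes K2 and G = K1 ><| (K2 x H), with K1 the
   2'-part of K and K2 x H cyclic of even order. *)

Lemma cent_cyclic_coprime_totient (gT : finGroupType) (K H : {group gT}) :
  cyclic K -> H \subset 'N(K) -> coprime #|H| (totient #|K|) -> H \subset 'C(K).
Proof.
move=> cycK nKH coH.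
have : #|conj_aut K @* H| %| 1.
  rewrite -(eqnP coH) dvdn_gcd dvdn_morphim -(card_Aut_cyclic cycK).
  by rewrite cardSg ?Aut_conj_aut.
rewrite dvdn1 -trivg_card1 => /eqP trivHK.
by rewrite -ker_conj_aut -sub_morphim_pre // trivHK sub1G.
Qed.

Lemma cent_cyclic_2group_odd (gT : finGroupType) (K H : {group gT}) :
  cyclic K -> 2.-group K -> H \subset 'N(K) -> odd #|H| -> H \subset 'C(K).
Proof.
move=> cycK p2K nKH oddH; apply: cent_cyclic_coprime_totient => //.
have [[|e] ->] := p_natP p2K; first by rewrite coprimen1.
by rewrite totient_pfactor // mul1n coprimeXr // coprimen2.
Qed.

Lemma cyclic_central_coprime_ext (gT : finGroupType) (Q Z : {group gT}) :
    Z <| Q -> Q \subset 'C(Z) -> cyclic Z -> cyclic (Q / Z) ->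
    coprime #|Z| #|Q / Z| ->
  cyclic Q.
Proof.
move=> nsZQ cZQ cycZ cycQZ coZ.
have [sZQ nZQ] := andP nsZQ.
have hallZ : Hall Q Z by rewrite /Hall sZQ -card_quotient.
have [C /complP [tiZC defQ]] := splitsP (SchurZassenhaus_split hallZ nsZQ).
have sCQ : C \subset Q by rewrite -defQ mulG_subr.
have isoC : C \isog Q / Z.
  by apply: sdprod_isog; rewrite sdprodE // (subset_trans sCQ nZQ).
have defQd : Z \x C = Q by rewrite dprodE // (subset_trans sCQ cZQ).
by rewrite (cyclic_dprod defQd) ?(isog_cyclic isoC) ?(card_isog isoC).
Qed.

Lemma metacyclic_even_quotient (gT : finGroupType) (G : {group gT}) :
    metacyclic G -> 2 %| #|G| ->
  exists N : {group gT}, [/\ cyclic N, N <| G, cyclic (G / N) & 2 %| #|G / N|].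
Proof.
case/metacyclicP=> N [cycN nsNG cycGN] evenG.
have [sNG nNG] := andP nsNG.
have [evenGN | oddGN] := boolP (2 %| #|G / N|); first by exists N.
rewrite dvdn2 negbK in oddGN.
have evenN : 2 %| #|N|.
  move: evenG; rewrite -(Lagrange sNG) -card_quotient // Euclid_dvdM //.
  by case/orP; rewrite // dvdn2 oddGN.
have [y defN] := cyclicP cycN.
pose M := <[y ^+ 2]>%G.
have sMN : M \subset N by rewrite defN cycleX.
have nsMG : M <| G by rewrite (char_normal_trans _ nsNG) ?sub_cyclic_char.
have nMN : N \subset 'N(M) := subset_trans sNG (normal_norm nsMG).
have cardNM : #|N / M| = 2.
  have orderY : #[y] = #|N| by rewrite defN.
  have cardM : #|M| = (#|N| %/ 2)%N by rewrite /= -orderE orderXdiv orderY.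
  have halfN_gt0 : (0 < #|N| %/ 2)%N by rewrite divn_gt0 // dvdn_leq.
  by rewrite card_quotient // -divgS // cardM -{1}(divnK evenN) mulKn.
have isoGNM : (G / M) / (N / M) \isog G / N := third_isog sMN nsMG nsNG.
have nsNMG : N / M <| G / M := quotient_normal M nsNG.
have cycNM : cyclic (N / M) by rewrite prime_cyclic ?cardNM.
exists M; split=> //; first exact: cycle_cyclic.
  apply: (cyclic_central_coprime_ext nsNMG) => //.
  - apply: cent_cyclic_coprime_totient => //; first exact: normal_norm.
    by rewrite cardNM coprimen1.
  - by rewrite (isog_cyclic isoGNM).
  - by rewrite cardNM (card_isog isoGNM) coprime2n.
by rewrite -cardNM cardSg ?quotientS.
Qed.

Lemma split_metacyclic_even_complement (gT : finGroupType) (G K H : {group gT}) :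
    K ><| H = G -> cyclic K -> cyclic H -> 2 %| #|G| ->
  exists K' H' : {group gT},
    [/\ K' ><| H' = G, cyclic K', cyclic H' & 2 %| #|H'|].
Proof.
move=> defG cycK cycH evenG.
have [evenH | oddH] := boolP (2 %| #|H|); first by exists K, H.
rewrite dvdn2 negbK in oddH.
have [nsKG sHG mulKH _ tiKH] := sdprod_context defG.
have evenK : 2 %| #|K|.
  move: evenG; rewrite -(sdprod_card defG) Euclid_dvdM //.
  by case/orP; rewrite // dvdn2 oddH.
pose K2 := 'O_2(K)%G; pose K1 := 'O_2^'(K)%G.
have defK : K2 \x K1 = K := nilpotent_pcoreC 2 (abelian_nil (cyclic_abelian cycK)).
have nsK1G : K1 <| G := char_normal_trans (pcore_char _ _) nsKG.
have nsK2G : K2 <| G := char_normal_trans (pcore_char _ _) nsKG.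
have nK2H : H \subset 'N(K2) := subset_trans sHG (normal_norm nsK2G).
have sK2K : K2 \subset K := pcore_sub _ _.
have sK1K : K1 \subset K := pcore_sub _ _.
have p2K2 : 2.-group K2 := pcore_pgroup _ _.
have evenK2 : 2 %| #|K2|.
  move: evenK; rewrite -(dprod_card defK) Euclid_dvdM // => /orP [//|].
  by move: (pcore_pgroup 2^' K); rewrite /pgroup p'natE // => /negbTE ->.
have cycK2 : cyclic K2 := cyclicS sK2K cycK.
have cK2H : H \subset 'C(K2) by apply: cent_cyclic_2group_odd.
have tiK2H : K2 :&: H = 1 by apply/trivgP; rewrite -tiKH setSI.
have defK2H : K2 \x H = K2 <*> H := dprodEY cK2H tiK2H.
have tiK1K2H : K1 :&: (K2 <*> H) = 1.
  rewrite joingC cent_joinEl // -(setIidPl sK1K) -setIA -group_modr //.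
  by rewrite tiKH mul1g setIC; case/dprodP: defK.
have sK2HG : K2 <*> H \subset G.
  by rewrite join_subG sHG normal_sub.
have defK1K2H : K1 * (K2 <*> H) = G.
  by rewrite cent_joinEr // mulgA (dprodWC defK) mulKH.
exists K1, (K2 <*> H)%G; split.
- by rewrite sdprodE ?defK1K2H ?(subset_trans sK2HG (normal_norm nsK1G)).
- exact: cyclicS sK1K cycK.
- rewrite /= (cyclic_dprod defK2H) // (pnat_coprime p2K2) //.
  by rewrite p'natE // dvdn2 negbK.
- exact: dvdn_trans evenK2 (cardSg (joing_subl _ _)).
Qed.

Theorem lemma4p1 (gT : finGroupType) (G : {group gT})
    (hmeta : metacyclic G) (heven : 2 %| #|G|) :
  (exists N : {group gT}, [/\ cyclic N, N <| G, cyclic (G / N) & 2 %| #|G / N|])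
  /\
  (split_metacyclic G ->
     exists K H : {group gT},
       [/\ K ><| H = G, cyclic K, cyclic H & 2 %| #|H|]).
Proof.
split; first exact: metacyclic_even_quotient.
case=> K [H [defG cycK cycH]].
exact: split_metacyclic_even_complement defG cycK cycH heven.
Qed.
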